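(* Let $\mathbf v\in\mathbb R^{n\times m}_{<0}$, $\mathbf b\in\mathbb R^n_{<0}$, and let $\mathbf z$ be a competitive allocation for $(\mathbf v,\mathbf b)$ with consumption graph $G=G_{\mathbf z}$ and $\mathbf u=\mathbf u(\mathbf z)$. For each chore $j$ let $n_j\ge1$ be the number of agents adjacent to $j$ in $G$, let $\bar{\mathbf z}$ be the allocation with $\bar z_{i,j}=1/n_j$ if $(i,j)\in G$ and $0$ otherwise, and $\bar u_i=u_i(\bar{\mathbf z}_i)$. Let $N^i$ be the set of agents in the connected component of $i$ in $G$, and for $i'\in N^i$ let $\pi_{i,i'}=\pi(\mathcal P)$ for any path $\mathcal P$ from $i$ to $i'$ in $G$ ($\pi_{i,i}=1$). Then for every agent $i$, $$u_i=\frac{b_i}{\sum_{i'\in N^i}b_{i'}}\sum_{i'\in N^i}\pi_{i,i'}\,\bar u_{i'}.$$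
   Context: Setup: agents $[n]$, chores $[m]$, allocations $\mathbf z\in\mathbb R^{n\times m}_{\ge0}$ with column sums $1$, $u_i(\mathbf z_i)=\sum_jv_{i,j}z_{i,j}$. Competitive allocation for budgets $\mathbf b$: there exist prices $\mathbf p\in\mathbb R^m_{<0}$ such that each $\mathbf z_i$ maximizes $u_i$ over bundles $\mathbf x\in\mathbb R^m_{\ge0}$ with $\sum_jp_jx_j\le b_i$. $G_{\mathbf z}$ has edge $(i,j)$ iff $z_{i,j}>0$. For a path $\mathcal P=(i_1,j_1,i_2,\dots,j_L,i_{L+1})$ alternating agents and chores, $\pi(\mathcal P)=\prod_{k=1}^L|v_{i_k,j_k}|/|v_{i_{k+1},j_k}|$ (for a competitive allocation this is path-independent within $G_{\mathbf z}$). *)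

From HB Require Import structures.
From mathcomp Require Import all_boot all_order all_algebra.
Set Implicit Arguments. Unset Strict Implicit. Unset Printing Implicit Defensive.
Import Order.TTheory GRing.Theory Num.Theory.
Local Open Scope ring_scope.

Section Chores.
Variables (R : realFieldType) (n m : nat).

Definition util (v : 'M[R]_(n, m)) (i : 'I_n) (x : 'I_m -> R) : R :=
  \sum_(j < m) v i j * x j.

Definition is_allocation (z : 'M[R]_(n, m)) : Prop :=
  (forall i j, 0 <= z i j) /\ (forall j, \sum_(i < n) z i j = 1).

Definition competitive (v : 'M[R]_(n, m)) (b : 'I_n -> R) (z : 'M[R]_(n, m))
  : Prop :=
  is_allocation z /\
  exists p : 'I_m -> R, (forall j, p j < 0) /\
    forall i : 'I_n,
      (\sum_(j < m) p j * z i j <= b i) /\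
      (forall x : 'I_m -> R, (forall j, 0 <= x j) ->
         \sum_(j < m) p j * x j <= b i -> util v i x <= util v i (z i)).

Definition cgraph (z : 'M[R]_(n, m)) : rel ('I_n + 'I_m)%type :=
  fun x y => match x, y with
             | inl i, inr j => 0 < z i j
             | inr j, inl i => 0 < z i j
             | _, _ => false
             end.

Definition agent_comp (z : 'M[R]_(n, m)) (i : 'I_n) : {set 'I_n} :=
  [set i' | connect (cgraph z) (inl i) (inl i')].

(* a path i_1, j_1, i_2, ..., j_L, i_{L+1} starting at agent i_1 is
   encoded as the sequence [(j_1,i_2); ...; (j_L,i_{L+1})] *)
Fixpoint is_walk (z : 'M[R]_(n, m)) (i : 'I_n) (s : seq ('I_m * 'I_n)) : bool :=
  match s with
  | [::] => true
  | (j, i2) :: s' => [&& 0 < z i j, 0 < z i2 j & is_walk z i2 s']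
  end.

Definition walk_end (i : 'I_n) (s : seq ('I_m * 'I_n)) : 'I_n :=
  last i (map snd s).

Fixpoint path_pi (v : 'M[R]_(n, m)) (i : 'I_n) (s : seq ('I_m * 'I_n)) : R :=
  match s with
  | [::] => 1
  | (j, i2) :: s' => `|v i j| / `|v i2 j| * path_pi v i2 s'
  end.

Definition deg_chore (z : 'M[R]_(n, m)) (j : 'I_m) : nat :=
  #|[set i : 'I_n | 0 < z i j]|.

Definition zbar (z : 'M[R]_(n, m)) : 'M[R]_(n, m) :=
  \matrix_(i, j) (if 0 < z i j then (deg_chore z j)%:R^-1 else 0).

End Chores.

From HB Require Import structures.
From mathcomp Require Import all_boot all_order all_algebra.
From mathcomp Require Import ring lra.
Set Implicit Arguments. Unset Strict Implicit. Unset Printing Implicit Defensive.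
Import Order.TTheory GRing.Theory Num.Theory.
Local Open Scope ring_scope.

(* Fix equilibrium prices p < 0.  For one agent k with an
   optimal bundle x, let alpha_k = u_k / b_k > 0 be its "bang per buck".
   Spending the whole budget on a single chore j shows v_{k,j} <= alpha_k p_j
   for every j; summing (alpha_k p_j - v_{k,j}) x_j >= 0 then forces the
   budget to be exhausted and v_{k,j} = alpha_k p_j on the support of x
   (the MBB condition).  Consequently pi along any walk from k to k' of the
   consumption graph telescopes to alpha_k / alpha_k', and
   ubar_k' = alpha_k' * sum_{j ~ k'} p_j / n_j.  Summing the equal-split
   prices p_j / n_j over a connected component N counts each chore of N
   exactly once, as does summing the spendings p_j z_{k,j}; hence
   sum_{k' in N} ubar_k' / alpha_k' = sum_{k' in N} b_k'.  The theorem follows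
   from u_i = alpha_i b_i. *)

Section OptimalBundle.
Variables (R : realFieldType) (n m : nat) (v : 'M[R]_(n, m)) (k : 'I_n).
Variables (p : 'I_m -> R) (bk : R) (x : 'I_m -> R).
Hypotheses (hv : forall j, v k j < 0) (hp : forall j, p j < 0) (hbk : bk < 0).
Hypotheses (hx0 : forall j, 0 <= x j) (hxb : \sum_(j < m) p j * x j <= bk).
Hypothesis hopt : forall y : 'I_m -> R, (forall j, 0 <= y j) ->
  \sum_(j < m) p j * y j <= bk -> util v k y <= util v k x.

Definition bang_per_buck : R := util v k x / bk.

Lemma util_eq_bpb_budget : util v k x = bang_per_buck * bk.
Proof. by rewrite divfK ?lt_eqF. Qed.

(* An affordable bundle must contain some chore, since the budget is < 0. *)
Lemma optimum_consumes : exists j, 0 < x j.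
Proof.
have [/existsP //|/existsPn no_chore] := boolP [exists j, 0 < x j].
have x0 j : x j = 0 by apply/eqP; rewrite eq_le hx0 andbT leNgt no_chore.
move: hxb; rewrite big1 => [|j _]; last by rewrite x0 mulr0.
by rewrite leNgt hbk.
Qed.

Lemma optimum_util_lt0 : util v k x < 0.
Proof.
have [j0 hj0] := optimum_consumes.
rewrite /util (bigD1 j0) //=.
have hj0v : v k j0 * x j0 < 0 by rewrite nmulr_rlt0.
have rest : \sum_(j < m | j != j0) v k j * x j <= 0.
  by apply: sumr_le0 => j _; rewrite nmulr_rle0 // ltW.
lra.
Qed.

Lemma bang_per_buck_gt0 : 0 < bang_per_buck.
Proof. by rewrite nmulr_rgt0 ?invr_lt0 ?optimum_util_lt0. Qed.

(* Comparing x with the bundle spending the whole budget on chore j. *)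
Lemma value_le_bpb_price j : v k j <= bang_per_buck * p j.
Proof.
pose w := bk / p j.
have hw : 0 < w by rewrite nmulr_rgt0 ?invr_lt0.
have bk_w : bk = p j * w by rewrite mulrC divfK ?lt_eqF.
pose y j' := if j' == j then w else 0.
have only_j f : \sum_(j' < m) f j' * y j' = f j * w.
  rewrite (bigD1 j) //= /y eqxx big1 ?addr0 // => j' /negbTE ->.
  by rewrite mulr0.
have hy j' : 0 <= y j' by rewrite /y; case: eqP => // _; apply: ltW.
have := hopt hy; rewrite only_j -bk_w lexx => /(_ isT).
rewrite /util only_j -/(util v k x).
by rewrite util_eq_bpb_budget bk_w mulrA ler_pM2r.
Qed.

Lemma bpb_gap :
  bang_per_buck * \sum_(j < m) p j * x j - util v k x
  = \sum_(j < m) (bang_per_buck * p j - v k j) * x j.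
Proof. by rewrite mulr_sumr /util -sumrB; apply: eq_bigr => j _; ring. Qed.

Lemma bpb_gap_term_ge0 j : 0 <= (bang_per_buck * p j - v k j) * x j.
Proof. by rewrite mulr_ge0 // subr_ge0 value_le_bpb_price. Qed.

Lemma optimum_spends_budget : \sum_(j < m) p j * x j = bk.
Proof.
have gap_ge0 : 0 <= bang_per_buck * \sum_(j < m) p j * x j - util v k x.
  by rewrite bpb_gap sumr_ge0 // => j _; apply: bpb_gap_term_ge0.
have alpha_gt0 := bang_per_buck_gt0.
apply/eqP; rewrite eq_le hxb /=.
have : bang_per_buck * (bk - \sum_(j < m) p j * x j) <= 0.
  by rewrite mulrBr -util_eq_bpb_budget; lra.
by rewrite pmulr_rle0 // subr_le0.
Qed.

Lemma optimum_mbb j : 0 < x j -> v k j = bang_per_buck * p j.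
Proof.
move=> hj.
have : \sum_(j' < m) (bang_per_buck * p j' - v k j') * x j' = 0.
  by rewrite -bpb_gap optimum_spends_budget -util_eq_bpb_budget subrr.
move/psumr_eq0P => /(_ (fun j' _ => bpb_gap_term_ge0 j') j isT) /eqP.
by rewrite mulf_eq0 (gt_eqF hj) orbF subr_eq0 => /eqP.
Qed.

End OptimalBundle.

Section EqualSplit.
Variables (R : realFieldType) (n m : nat) (z : 'M[R]_(n, m)) (N : {set 'I_n}).
Hypothesis hz0 : forall k j, 0 <= z k j.
Hypothesis hzcol : forall j, \sum_(k < n) z k j = 1.
Hypothesis N_closed :
  forall k k' j, k \in N -> 0 < z k j -> 0 < z k' j -> k' \in N.

(* Both the equal split of a chore's price and its actual split among its
   consumers charge the whole price to N if the chore touches N, else 0. *)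
Lemma equal_split_share (c : R) (j : 'I_m) :
  \sum_(k in N) (if 0 < z k j then c / (deg_chore z j)%:R else 0)
  = \sum_(k in N) c * z k j.
Proof.
have z_eq0 k : ~~ (0 < z k j) -> z k j = 0.
  by move=> hk; apply/eqP; rewrite eq_le hz0 andbT leNgt.
have [/exists_inP [k0 k0N hk0]|/exists_inPn untouched] :=
  boolP [exists k in N, 0 < z k j].
  have inN k : 0 < z k j -> k \in N by move=> /(N_closed k0N hk0).
  have whole (G : 'I_n -> R) : (forall k, k \notin N -> G k = 0) ->
      \sum_(k in N) G k = \sum_k G k.
    move=> hG; rewrite big_mkcond; apply: eq_bigr => k _.
    by case: ifPn => // /hG.
  rewrite [LHS]whole => [|k kN]; last by case: ifP => // /inN; rewrite (negbTE kN).
  rewrite [RHS]whole => [|k kN]; last first.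
    by rewrite z_eq0 ?mulr0 //; apply: contra kN; apply: inN.
  rewrite -mulr_sumr hzcol mulr1 -big_mkcond /=.
  rewrite (eq_bigl [in [set k | 0 < z k j]]) => [|k]; last by rewrite inE.
  have deg_gt0 : (deg_chore z j)%:R != 0 :> R.
    by rewrite pnatr_eq0 -lt0n; apply/card_gt0P; exists k0; rewrite inE.
  by rewrite sumr_const -/(deg_chore z j) -[_ *+ _]mulr_natr divfK.
rewrite !big1 // => k kN; first by rewrite z_eq0 ?mulr0 ?untouched.
by rewrite ifF // (negbTE (untouched k kN)).
Qed.

End EqualSplit.

Lemma agent_comp_closed (R : realFieldType) (n m : nat) (z : 'M[R]_(n, m))
    (i k k' : 'I_n) (j : 'I_m) :
  k \in agent_comp z i -> 0 < z k j -> 0 < z k' j -> k' \in agent_comp z i.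
Proof.
rewrite !inE => ik hk hk'.
apply: connect_trans ik _; apply: (connect_trans (y := inr j));
  exact: connect1.
Qed.

Section Market.
Variables (R : realFieldType) (n m : nat) (v : 'M[R]_(n, m)).
Variables (b : 'I_n -> R) (z : 'M[R]_(n, m)) (p : 'I_m -> R).
Hypotheses (hv : forall k j, v k j < 0) (hb : forall k, b k < 0).
Hypotheses (hp : forall j, p j < 0) (hz0 : forall k j, 0 <= z k j).
Hypothesis hopt : forall k : 'I_n,
  (\sum_(j < m) p j * z k j <= b k) /\
  (forall x : 'I_m -> R, (forall j, 0 <= x j) ->
     \sum_(j < m) p j * x j <= b k -> util v k x <= util v k (z k)).

Local Notation alpha k := (bang_per_buck v k (b k) (z k)).

Let alpha_gt0 k : 0 < alpha k.
Proof. exact: (bang_per_buck_gt0 (hv k) (hb k) (hz0 k) (hopt k).1). Qed.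

Let mbb k j : 0 < z k j -> v k j = alpha k * p j.
Proof. exact: (optimum_mbb (hv k) hp (hb k) (hz0 k) (hopt k).1 (hopt k).2). Qed.

Lemma spending_eq_budget k : \sum_(j < m) p j * z k j = b k.
Proof. exact: (optimum_spends_budget (hv k) hp (hb k) (hz0 k) (hopt k).1 (hopt k).2). Qed.

Lemma path_pi_walk s k :
  is_walk z k s -> path_pi v k s = alpha k / alpha (walk_end k s).
Proof.
elim: s k => [|[j k2] s IH] k /=; first by rewrite divff ?gt_eqF.
case/and3P => hkj hk2j walk_s.
rewrite (IH _ walk_s) !ltr0_norm // (mbb hkj) (mbb hk2j) /walk_end /=.
have a_k2 := alpha_gt0 k2; have a_end := alpha_gt0 (last k2 (map snd s)).
by field; rewrite (gt_eqF a_k2) (gt_eqF a_end) (lt_eqF (hp j)).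
Qed.

Lemma util_zbar k : util v k (zbar z k) =
  alpha k * \sum_(j < m) (if 0 < z k j then p j / (deg_chore z j)%:R else 0).
Proof.
rewrite /util mulr_sumr; apply: eq_bigr => j _; rewrite /zbar mxE.
by case: ifP => hkj; rewrite ?mulr0 // (mbb hkj) mulrA.
Qed.

Lemma sum_util_zbar_bpb (N : {set 'I_n}) :
  (forall j, \sum_(k < n) z k j = 1) ->
  (forall k k' j, k \in N -> 0 < z k j -> 0 < z k' j -> k' \in N) ->
  \sum_(k in N) util v k (zbar z k) / alpha k = \sum_(k in N) b k.
Proof.
move=> hzcol N_closed.
under eq_bigr => k _ do rewrite util_zbar mulrC mulKf ?gt_eqF //.
rewrite exchange_big /=.
under eq_bigr => j _ do rewrite (equal_split_share hz0 hzcol N_closed).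
by rewrite exchange_big /=; apply: eq_bigr => k _; rewrite spending_eq_budget.
Qed.

End Market.

(* u_i = alpha_i b_i, and by path_pi_walk the right-hand side equals
   b_i / B * alpha_i * sum_{k in N^i} ubar_k / alpha_k = b_i / B * alpha_i * B. *)
Theorem proposition4 (R : realFieldType) (n m : nat)
  (v : 'M[R]_(n, m)) (b : 'I_n -> R) (z : 'M[R]_(n, m))
  (hv : forall i j, v i j < 0) (hb : forall i, b i < 0)
  (hz : competitive v b z)
  (i : 'I_n) (P : 'I_n -> seq ('I_m * 'I_n))
  (hP : forall i', i' \in agent_comp z i ->
          is_walk z i (P i') /\ walk_end i (P i') = i') :
  util v i (z i) =
    b i / (\sum_(i' in agent_comp z i) b i') *
    \sum_(i' in agent_comp z i) path_pi v i (P i') * util v i' (zbar z i').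
Proof.
case: hz => [[hz0 hzcol] [p [hp hopt]]].
pose alpha k := bang_per_buck v k (b k) (z k).
set N := agent_comp z i.
have budget_lt0 : \sum_(k in N) b k < 0.
  rewrite (bigD1 i) ?inE ?connect0 //=.
  have : \sum_(k in N | k != i) b k <= 0 by apply: sumr_le0 => k _; apply: ltW.
  by have := hb i; lra.
have budget_neq0 : \sum_(k in N) b k != 0 by apply: ltr0_neq0.
have -> : \sum_(k in N) path_pi v i (P k) * util v k (zbar z k)
          = alpha i * \sum_(k in N) util v k (zbar z k) / alpha k.
  rewrite mulr_sumr; apply: eq_bigr => k kN; have [walk_k end_k] := hP k kN.
  by rewrite (path_pi_walk hv hb hp hz0 hopt walk_k) end_k mulrAC mulrA.
rewrite (sum_util_zbar_bpb hv hb hp hz0 hopt hzcol (@agent_comp_closed _ _ _ _ i)).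
rewrite (@util_eq_bpb_budget _ _ _ v i (b i) (z i) (hb i)).
by rewrite mulrCA -/N (divfK budget_neq0).
Qed.
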